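(* Let $d \geq 3$. Then the morphism \[\mathbb{P}^1\times\mathbb{P}^1 \to \mathbb{P}^4,\quad [x_0:x_1]\times[y_0:y_1] \mapsto \Big[x_0y_0^d : d x_0y_0^{d-1}y_1 + x_1y_0^d : \tbinom{d}{2}x_0y_0^{d-2}y_1^2 + d x_1y_0^{d-1}y_1 : x_0y_1^d + d x_1y_0y_1^{d-1} : x_1y_1^d\Big]\] is injective. In particular, $\operatorname{injdim}(\mathbb{P}^1\times\mathbb{P}^1,\mathcal{O}(1,d)) \leq 4$.
   Context: Over $\mathbb{C}$. For a line bundle $\mathscr{L}$ on a projective variety $X$ and a nonzero subspace $V \subseteq H^0(X,\mathscr{L})$, $\varphi_V \colon X \dashrightarrow \mathbb{P}(V^* )$ is the rational map given by the sections in $V$; $\operatorname{injdim}(X,\mathscr{L}) := \inf\{\dim V - 1 : \varphi_V \text{ is an injective morphism}\}$. *)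

From HB Require Import structures.
From mathcomp Require Import all_boot all_order all_algebra.
From mathcomp Require Import complex.
From mathcomp Require Import Rstruct.
Set Implicit Arguments. Unset Strict Implicit. Unset Printing Implicit Defensive.
Import Order.TTheory GRing.Theory Num.Theory.
Local Open Scope ring_scope.

Definition C : fieldType := (Rdefinitions.R)[i].

(* Homogeneous coordinate vectors; a point of P^n is a nonzero vector of
   C^(n+1) up to nonzero scaling. *)
Definition proj_eq (n : nat) (u v : 'rV[C]_n) : Prop :=
  exists c : C, c != 0 /\ u = c *: v.

Definition phi_d (d : nat) (x y : 'rV[C]_2) : 'rV[C]_5 :=
  let x0 := x 0 0 in let x1 := x 0 1 in
  let y0 := y 0 0 in let y1 := y 0 1 in
  \row_(k < 5)
    match val k with
    | 0 => x0 * y0 ^+ d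
    | 1 => d%:R * x0 * y0 ^+ (d - 1) * y1 + x1 * y0 ^+ d
    | 2 => 'C(d, 2)%:R * x0 * y0 ^+ (d - 2) * y1 ^+ 2
           + d%:R * x1 * y0 ^+ (d - 1) * y1
    | 3 => x0 * y1 ^+ d + d%:R * x1 * y0 * y1 ^+ (d - 1)
    | _ => x1 * y1 ^+ d
    end.

(* H^0(P^1 x P^1, O(1,d)) = bihomogeneous forms of bidegree (1,d) in
   (x0,x1 ; y0,y1); a form is encoded by its coefficient matrix s, with
   s i j the coefficient of x_i * y0^(d-j) * y1^j. *)
Definition section (d : nat) := 'M[C]_(2, d.+1).

Definition eval_section (d : nat) (s : section d) (x y : 'rV[C]_2) : C :=
  \sum_(i < 2) \sum_(j < d.+1)
     s i j * x 0 i * (y 0 0) ^+ (d - j) * (y 0 1) ^+ j.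

(* The map phi_V given by a basis of V (any other basis changes phi_V by a
   linear automorphism of the target projective space). *)
Definition phi_V (d : nat) (V : {vspace section d}) (x y : 'rV[C]_2)
  : 'rV[C]_(\dim V) :=
  \row_(k < \dim V) eval_section (vbasis V)`_k x y.

(* phi_V is an injective morphism: it has no base points on P^1 x P^1 and
   it is injective on points. *)
Definition injective_morphism (n : nat)
  (f : 'rV[C]_2 -> 'rV[C]_2 -> 'rV[C]_n) : Prop :=
  (forall x y, x != 0 -> y != 0 -> f x y != 0) /\
  (forall x y x' y', x != 0 -> y != 0 -> x' != 0 -> y' != 0 ->
     proj_eq (f x y) (f x' y') -> proj_eq x x' /\ proj_eq y y').

(* injdim(P^1 x P^1, O(1,d)) <= N, i.e. the infimum of dim V - 1 over the
   nonzero subspaces V with phi_V an injective morphism is at most N. *)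
Definition injdim_P1P1_le (d N : nat) : Prop :=
  exists V : {vspace section d},
    V != 0%VS /\ ((\dim V).-1 <= N)%N /\ injective_morphism (phi_V V).

(* In the chart y = (1, t) the map sends x = (a, b) to
     A(a, b, t) = (a, d a t + b, C(d,2) a t^2 + d b t, a t^d + d b t^(d-1), b t^d),
   which is linear in (a, b), while on the line y0 = 0 it is (0, 0, 0, a, b) up
   to the factor y1^d; the first two coordinates vanish exactly on that line.
   Injectivity thus reduces to: A(a, b, t) = A(a, b', t') forces t = t'.  The
   second coordinate expresses b through b', the third (divided by t - t')
   expresses b' through a, t, t'; substituting into the last two coordinates
   and eliminating leaves d (d - 1) (t - t')^3 t'^(d-1) = 0, and symmetrically
   with t^(d-1), so t <> t' would force t = t' = 0.  The five coordinates are
   evaluations of five sections of O(1, d), whose span V therefore has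
   phi_V injective and dim V <= 5. *)

From mathcomp Require Import all_boot all_order all_algebra.
From mathcomp Require Import complex Rstruct ring.
Set Implicit Arguments. Unset Strict Implicit. Unset Printing Implicit Defensive.
Import GRing.Theory Num.Theory.
Local Open Scope ring_scope.

Lemma row2P (T : Type) (u v : 'rV[T]_2) : u 0 0 = v 0 0 -> u 0 1 = v 0 1 -> u = v.
Proof.
move=> e0 e1; apply/rowP => -[[|[|//]] lt_i2].
- by rewrite (_ : Ordinal lt_i2 = 0) //; apply: val_inj.
- by rewrite (_ : Ordinal lt_i2 = 1) //; apply: val_inj.
Qed.

Lemma row2_eq0 (R : nmodType) (u : 'rV[R]_2) :
  (u == 0) = (u 0 0 == 0) && (u 0 1 == 0).
Proof.
apply/eqP/andP => [-> | [/eqP u0 /eqP u1]]; first by rewrite !mxE.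
by apply: row2P; rewrite mxE.
Qed.

Definition row5 (T : Type) (a0 a1 a2 a3 a4 : T) : 'rV[T]_5 :=
  \row_(k < 5) nth a0 [:: a0; a1; a2; a3; a4] k.

Lemma row5_inj (T : Type) (a0 a1 a2 a3 a4 b0 b1 b2 b3 b4 : T) :
  row5 a0 a1 a2 a3 a4 = row5 b0 b1 b2 b3 b4 ->
  [/\ a0 = b0, a1 = b1, a2 = b2, a3 = b3 & a4 = b4].
Proof.
move/rowP=> e.
by split; [move: (e 0) | move: (e 1) | move: (e 2%:R) | move: (e 3%:R)
          | move: (e 4%:R)]; rewrite !mxE.
Qed.

Lemma scale_row5 (R : pzRingType) (c a0 a1 a2 a3 a4 : R) :
  c *: row5 a0 a1 a2 a3 a4 = row5 (c * a0) (c * a1) (c * a2) (c * a3) (c * a4).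
Proof. by apply/rowP => -[[|[|[|[|[|//]]]]] ?]; rewrite !mxE. Qed.

Lemma row5_eq0 (R : nmodType) (a0 a1 a2 a3 a4 : R) :
  (row5 a0 a1 a2 a3 a4 == 0) = [&& a0 == 0, a1 == 0, a2 == 0, a3 == 0 & a4 == 0].
Proof.
have -> : 0 = row5 0 0 0 0 0 :> 'rV[R]_5.
  by apply/rowP => -[[|[|[|[|[|//]]]]] ?]; rewrite !mxE.
apply/eqP/and5P => [E | [/eqP-> /eqP-> /eqP-> /eqP-> /eqP->] //].
by have [-> -> -> -> ->] := row5_inj E.
Qed.

Lemma lincomb_eq0 (R : comPzRingType) (l1 r1 l2 r2 k1 k2 p : R) :
  l1 = r1 -> l2 = r2 -> p = k1 * (l1 - r1) + k2 * (l2 - r2) -> p = 0.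
Proof. by move=> -> -> ->; rewrite !subrr !mulr0 addr0. Qed.

Section AffineChart.
Variables (F : fieldType) (F0 : [pchar F] =i pred0).

Definition phi_affine (d : nat) (a b t : F) : 'rV[F]_5 :=
  row5 a (d%:R * a * t + b) ('C(d, 2)%:R * a * t ^+ 2 + d%:R * b * t)
       (a * t ^+ d + d%:R * b * t ^+ d.-1) (b * t ^+ d).

Lemma scale_phi_affine d (c a b t : F) :
  c *: phi_affine d a b t = phi_affine d (c * a) (c * b) t.
Proof. by rewrite scale_row5; congr row5; ring. Qed.

Let natf_neq0 n : n.+1%:R != 0 :> F.
Proof. by move/pcharf0P: F0 => ->. Qed.

Lemma phi_affine_eq_t0 n (a b b' t t' : F) : a != 0 -> t != t' ->
  phi_affine n.+3 a b t = phi_affine n.+3 a b' t' -> t' = 0.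
Proof.
move=> a0 tt' E; have {E} [_ e1 e2 e3 e4] := row5_inj E.
rewrite /= [t ^+ n.+3]exprS [t' ^+ n.+3]exprS in e3 e4.
move: e1 e2 e3 e4; set D := n.+3%:R; set Cd := 'C(n.+3, 2)%:R.
set T := t ^+ n.+2; set T' := t' ^+ n.+2 => e1 e2 e3 e4.
have D_neq0 : D != 0 by exact: natf_neq0.
have Dm1E : D - 1 = n.+2%:R by rewrite /D -natr1 addrK.
have Dm1_neq0 : D - 1 != 0 by rewrite Dm1E natf_neq0.
have Dp1_neq0 : D + 1 != 0 by rewrite /D natr1 natf_neq0.
have binE : Cd * 2 = D * (D - 1).
  by rewrite Dm1E /Cd /D -!natrM mulnC -mul_bin_diag bin1.
clearbody D Cd.
have u0 : t - t' != 0 by rewrite subr_eq0.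
have e2_reduced : Cd * a * (t + t') + D * b' - D * D * a * t = 0.
  apply: (mulfI u0); rewrite mulr0.
  by apply: (lincomb_eq0 (k1 := 1) (k2 := - D * t) e2 e1); ring.
have bE : b = b' - D * a * (t - t') by apply: (addrI (D * a * t)); rewrite e1; ring.
subst b.
have b'E : 2 * b' - a * ((D + 1) * t - (D - 1) * t') = 0.
  apply: (mulfI D_neq0); rewrite mulr0.
  by apply: (lincomb_eq0 (k1 := 2) (k2 := - a * (t + t')) e2_reduced binE); ring.
have e3_reduced : (D * t' - (D - 2) * t) * T - (D * t - (D - 2) * t') * T' = 0.
  apply: (mulfI (mulf_neq0 a0 Dp1_neq0)); rewrite mulr0.
  by apply: (lincomb_eq0 (k1 := 2) (k2 := - D * (T - T')) e3 b'E); ring.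
have e4_reduced : ((D + 1) * t' - (D - 1) * t) * t * T
          - ((D + 1) * t - (D - 1) * t') * t' * T' = 0.
  apply: (mulfI a0); rewrite mulr0.
  by apply: (lincomb_eq0 (k1 := 2) (k2 := - (t * T - t' * T')) e4 b'E); ring.
have : D * (D - 1) * (t - t') ^+ 3 * T' = 0.
  by apply: (lincomb_eq0 (k1 := ((D + 1) * t' - (D - 1) * t) * t)
                         (k2 := - (D * t' - (D - 2) * t)) e3_reduced e4_reduced); ring.
have nz : D * (D - 1) * (t - t') ^+ 3 != 0 by rewrite !mulf_neq0 ?expf_neq0.
by move/eqP; rewrite mulf_eq0 (negbTE nz) /= /T' expf_eq0 => /andP[_ /eqP].
Qed.

Lemma phi_affine_inj d (a b t a' b' t' : F) : (3 <= d)%N -> (a != 0) || (b != 0) ->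
  phi_affine d a b t = phi_affine d a' b' t' -> [/\ a = a', b = b' & t = t'].
Proof.
case: d => [|[|[|n]]] // _ ab0 E.
have [e0 e1 e2 _ _] := row5_inj E; subst a'.
have D0 : n.+3%:R != 0 :> F := natf_neq0 n.+2.
have tt' : t = t'.
  have [a0 | a0] := eqVneq a 0.
    subst a; rewrite eqxx /= in ab0.
    rewrite !mulr0 !mul0r !add0r in e1 e2; subst b'.
    exact: (mulfI (mulf_neq0 D0 ab0) e2).
  have [// | neq_tt'] := eqVneq t t'.
  have t'0 := phi_affine_eq_t0 a0 neq_tt' E.
  have t0 : t = 0 by apply: (phi_affine_eq_t0 a0 _ (esym E)); rewrite eq_sym.
  by rewrite t0 t'0.
by subst t'; split=> //; apply: addrI e1.
Qed.

End AffineChart.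

Lemma pchar_C : [pchar C] =i pred0.
Proof. exact: pchar_num. Qed.

Lemma proj_eqZ n (s s' : C) (v w : 'rV[C]_n) : s != 0 -> s' != 0 ->
  proj_eq (s *: v) (s' *: w) -> proj_eq v w.
Proof.
move=> s0 s'0 [c [c0 e]]; exists (c * s' / s); split.
  by rewrite !mulf_neq0 ?invr_neq0.
by rewrite -(scalerK s0 v) e !scalerA mulrC.
Qed.

Lemma proj_eq_row2 (y y' : 'rV[C]_2) : y != 0 -> y' != 0 ->
  y 0 0 * y' 0 1 = y 0 1 * y' 0 0 -> proj_eq y y'.
Proof.
move=> y_nz y'_nz cross; have [y'00 | y'0n] := eqVneq (y' 0 0) 0.
- have y'1 : y' 0 1 != 0 by move: y'_nz; rewrite row2_eq0 y'00 eqxx.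
  have y00 : y 0 0 = 0.
    by move/eqP: cross; rewrite y'00 mulr0 mulf_eq0 (negbTE y'1) orbF => /eqP.
  have y1 : y 0 1 != 0 by move: y_nz; rewrite row2_eq0 y00 eqxx.
  exists (y 0 1 / y' 0 1); split; first by rewrite mulf_neq0 ?invr_neq0.
  by apply: row2P; rewrite mxE ?y00 ?y'00 ?mulr0 ?divfK.
- have y0n : y 0 0 != 0.
    apply: contraNneq y_nz => y00; move/eqP: cross.
    by rewrite y00 mul0r eq_sym mulf_eq0 (negbTE y'0n) orbF row2_eq0 y00 eqxx.
  exists (y 0 0 / y' 0 0); split; first by rewrite mulf_neq0 ?invr_neq0.
  by apply: row2P; rewrite mxE ?divfK // mulrAC cross mulfK.
Qed.

Lemma phi_d_chart0 d (x y : 'rV[C]_2) (t : C) : (2 <= d)%N -> y 0 1 = t * y 0 0 ->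
  phi_d d x y = y 0 0 ^+ d *: phi_affine d (x 0 0) (x 0 1) t.
Proof.
case: d => [|[|n]] // _ y1E; rewrite scale_row5.
apply/rowP => -[[|[|[|[|[|//]]]]] ?]; rewrite !mxE /= ?y1E ?subn1 ?subn2 /=.
all: by rewrite ?exprMn !exprS; ring.
Qed.

Lemma phi_d_chart1 d (x y : 'rV[C]_2) : (3 <= d)%N -> y 0 0 = 0 ->
  phi_d d x y = y 0 1 ^+ d *: row5 0 0 0 (x 0 0) (x 0 1).
Proof.
case: d => [|[|[|n]]] // _ y00; rewrite scale_row5.
apply/rowP => -[[|[|[|[|[|//]]]]] ?].
all: by rewrite !mxE /= ?y00 ?subn1 ?subn2 ?expr0n /=; ring.
Qed.

Lemma phi_d_head_eq0 d (x y : 'rV[C]_2) : (3 <= d)%N -> x != 0 ->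
  (phi_d d x y 0 0 == 0) && (phi_d d x y 0 1 == 0) = (y 0 0 == 0).
Proof.
move=> d_gt2 x_nz; have [y00 | y0n] := eqVneq (y 0 0) 0.
  by rewrite phi_d_chart1 // !mxE /= !mulr0 eqxx.
rewrite (@phi_d_chart0 _ _ _ (y 0 1 / y 0 0)) ?divfK ?(ltnW d_gt2) // !mxE /=.
rewrite !mulf_eq0 expf_eq0 (negbTE y0n) andbF /=.
apply: contraNF x_nz => /andP[/eqP x00]; rewrite x00 !(mulr0, mul0r, add0r) => x01.
by rewrite row2_eq0 x00 x01 eqxx.
Qed.

Lemma phi_d_neq0 d (x y : 'rV[C]_2) : (3 <= d)%N -> x != 0 -> y != 0 ->
  phi_d d x y != 0.
Proof.
move=> d_gt2 x_nz y_nz; have [y00 | y0n] := eqVneq (y 0 0) 0.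
  have y1 : y 0 1 != 0 by move: y_nz; rewrite row2_eq0 y00 eqxx.
  rewrite phi_d_chart1 // scaler_eq0 row5_eq0 expf_eq0 (negbTE y1) andbF !eqxx /=.
  by rewrite -row2_eq0.
apply/eqP => phi0; move: y0n; rewrite -(phi_d_head_eq0 y d_gt2 x_nz) phi0.
by rewrite !mxE eqxx.
Qed.

Lemma phi_d_proj_inj d (x y x' y' : 'rV[C]_2) : (3 <= d)%N ->
  x != 0 -> y != 0 -> x' != 0 -> y' != 0 ->
  proj_eq (phi_d d x y) (phi_d d x' y') -> proj_eq x x' /\ proj_eq y y'.
Proof.
move=> d_gt2 x_nz y_nz x'_nz y'_nz phiE; have [c [c0 E]] := phiE.
have head k : (phi_d d x y 0 k == 0) = (phi_d d x' y' 0 k == 0).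
  by rewrite E mxE mulf_eq0 (negbTE c0).
have at_infinity : (y 0 0 == 0) = (y' 0 0 == 0).
  by rewrite -(phi_d_head_eq0 y d_gt2 x_nz) -(phi_d_head_eq0 y' d_gt2 x'_nz) !head.
have [y'00 | y'0n] := eqVneq (y' 0 0) 0.
- have y00 : y 0 0 = 0 by apply/eqP; rewrite at_infinity y'00.
  have y1 : y 0 1 != 0 by move: y_nz; rewrite row2_eq0 y00 eqxx.
  have y'1 : y' 0 1 != 0 by move: y'_nz; rewrite row2_eq0 y'00 eqxx.
  move: phiE; rewrite !phi_d_chart1 //.
  move=> /(proj_eqZ (expf_neq0 _ y1) (expf_neq0 _ y'1)) [mu [mu0]].
  rewrite scale_row5 => E'; have [_ _ _ ex0 ex1] := row5_inj E'.
  split; last by apply: proj_eq_row2; rewrite ?y00 ?y'00 ?mul0r ?mulr0.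
  by exists mu; split=> //; apply: row2P; rewrite mxE.
- have y0n : y 0 0 != 0 by rewrite at_infinity.
  pose t := y 0 1 / y 0 0; pose t' := y' 0 1 / y' 0 0.
  have y1E : y 0 1 = t * y 0 0 by rewrite /t divfK.
  have y'1E : y' 0 1 = t' * y' 0 0 by rewrite /t' divfK.
  move: phiE; rewrite (phi_d_chart0 _ (ltnW d_gt2) y1E).
  rewrite (phi_d_chart0 _ (ltnW d_gt2) y'1E).
  move=> /(proj_eqZ (expf_neq0 _ y0n) (expf_neq0 _ y'0n)) [mu [mu0]].
  rewrite scale_phi_affine => E'.
  have [|ex0 ex1 tt'] := phi_affine_inj pchar_C d_gt2 _ E'.
    by rewrite -negb_and -row2_eq0.
  split; first by exists mu; split=> //; apply: row2P; rewrite mxE.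
  by apply: proj_eq_row2 => //; rewrite y1E y'1E tt'; ring.
Qed.

Lemma injective_morphism_transfer m n
    (f : 'rV[C]_2 -> 'rV[C]_2 -> 'rV[C]_m) (g : 'rV[C]_2 -> 'rV[C]_2 -> 'rV[C]_n) :
  (forall x y x' y' c, g x y = c *: g x' y' -> f x y = c *: f x' y') ->
  injective_morphism f -> injective_morphism g.
Proof.
move=> gf [f_neq0 f_inj].
split=> [x y x_nz y_nz | x y x' y' x_nz y_nz x'_nz y'_nz [c [c0 e]]].
  apply: contra_neq (f_neq0 x y x_nz y_nz) => g0.
  by rewrite (gf x y x y 0) ?scale0r // g0 scale0r.
by apply: f_inj => //; exists c; split=> //; apply: gf.
Qed.

Lemma eval_sectionD d (s s' : section d) x y :
  eval_section (s + s') x y = eval_section s x y + eval_section s' x y.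
Proof.
rewrite /eval_section -big_split; apply: eq_bigr => i _.
by rewrite -big_split; apply: eq_bigr => j _; rewrite mxE !mulrDl.
Qed.

Lemma eval_sectionZ d c (s : section d) x y :
  eval_section (c *: s) x y = c * eval_section s x y.
Proof.
rewrite /eval_section mulr_sumr; apply: eq_bigr => i _.
by rewrite mulr_sumr; apply: eq_bigr => j _; rewrite mxE !mulrA.
Qed.

Lemma eval_section_sum d m (s : 'I_m -> section d) x y :
  eval_section (\sum_(i < m) s i) x y = \sum_(i < m) eval_section (s i) x y.
Proof.
apply: (big_morph (fun s => eval_section s x y)) => [s1 s2|].
  exact: eval_sectionD.
by rewrite -(scale0r 0) eval_sectionZ mul0r.
Qed.

Lemma eval_section_delta d (i : 'I_2) (j : 'I_d.+1) x y :
  eval_section (delta_mx i j) x y = x 0 i * y 0 0 ^+ (d - j) * y 0 1 ^+ j.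
Proof.
rewrite /eval_section (bigD1 i) //= (bigD1 j) //= !mxE !eqxx mul1r.
rewrite big1 => [|j' /negbTE nj]; last by rewrite mxE eqxx nj !mul0r.
rewrite addr0 big1 => [|i' /negbTE ni]; first by rewrite addr0.
by rewrite big1 // => j' _; rewrite mxE ni !mul0r.
Qed.

Lemma eval_section_phi_V d (V : {vspace section d}) (s : section d) x y x' y' c :
  s \in V -> phi_V V x y = c *: phi_V V x' y' ->
  eval_section s x y = c * eval_section s x' y'.
Proof.
move=> sV /rowP e; rewrite (coord_vbasis sV) !eval_section_sum mulr_sumr.
apply: eq_bigr => i _; have := e i; rewrite !mxE => ei.
by rewrite !eval_sectionZ ei mulrCA.
Qed.

Definition phi_d_section d (k : 'I_5) : section d :=
  match val k with
  | 0 => delta_mx 0 0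
  | 1 => d%:R *: delta_mx 0 (inord 1) + delta_mx 1 0
  | 2 => 'C(d, 2)%:R *: delta_mx 0 (inord 2) + d%:R *: delta_mx 1 (inord 1)
  | 3 => delta_mx 0 ord_max + d%:R *: delta_mx 1 (inord d.-1)
  | _ => delta_mx 1 ord_max
  end.

Lemma eval_phi_d_section d k x y : (2 <= d)%N ->
  eval_section (phi_d_section d k) x y = phi_d d x y 0 k.
Proof.
case: d => [|[|n]] // _; rewrite mxE /phi_d_section.
case: k => -[|[|[|[|[|//]]]]] ? /=.
all: rewrite ?eval_sectionD ?eval_sectionZ !eval_section_delta ?inordK //=.
all: by rewrite ?subn0 ?subn1 ?subn2 ?subnn ?subSnn ?expr0 ?expr1 ?mulr1 /= ?mulrA.
Qed.

Definition phi_d_span d : {vspace section d} := <<codom (phi_d_section d)>>%VS.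

Lemma phi_d_section_in d k : phi_d_section d k \in phi_d_span d.
Proof. exact/memv_span/codom_f. Qed.

Theorem proposition4p3 (d : nat) (hd : (3 <= d)%N) :
  injective_morphism (phi_d d) /\ injdim_P1P1_le d 4.
Proof.
have inj_phi_d : injective_morphism (phi_d d).
  by split=> [x y | x y x' y']; [exact: phi_d_neq0 | exact: phi_d_proj_inj].
split=> //; exists (phi_d_span d); split; [|split].
- apply: contraTneq (phi_d_section_in d 0) => ->.
  by rewrite memv0; apply/eqP => /matrixP/(_ 0 0)/eqP; rewrite !mxE oner_eq0.
- have := dim_span (codom (phi_d_section d)).
  by rewrite size_codom card_ord; case: (\dim _).
- apply: (injective_morphism_transfer _ inj_phi_d) => x y x' y' c e.
  apply/rowP => k; rewrite [RHS]mxE -!(eval_phi_d_section _ _ _ (ltnW hd)).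
  exact: eval_section_phi_V (phi_d_section_in d k) e.
Qed.
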